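(* For $n\ge 2$, let $S_n$ denote the bitsum (number of $1$s) of a bimultus bitstring of length $n$ chosen uniformly at random among all bimultus bitstrings of length $n$. Then \[ \lim_{n\to\infty}\frac{\mathbb{E}(S_n)}{n}=\frac12, \qquad \lim_{n\to\infty}\frac{\mathbb{V}(S_n)}{n}=\frac{5+3\sqrt{5}}{40}=0.2927050983\ldots \]
   Context: A finite bitstring (a finite word over $\{0,1\}$) is called bimultus if each of its $1$s has at least one neighboring (adjacent) $1$ and each of its $0$s has at least one neighboring $0$; equivalently, it contains neither an isolated $1$ nor an isolated $0$. Bimultus bitstrings of length $n$ exist for every $n\ge 2$ (e.g. $0\cdots0$). $\mathbb{E}$ and $\mathbb{V}$ denote expectation and variance with respect to the uniform distribution on bimultus bitstrings of length $n$. *)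

From HB Require Import structures.
From mathcomp Require Import all_boot all_order all_algebra.
From mathcomp Require Import all_classical all_reals all_analysis.
Set Implicit Arguments. Unset Strict Implicit. Unset Printing Implicit Defensive.
Import Order.TTheory GRing.Theory Num.Theory.
Local Open Scope ring_scope.

Definition has_equal_neighbor (s : seq bool) (i : nat) : bool :=
  ((0 < i)%N && (nth false s i.-1 == nth false s i)) ||
  ((i.+1 < size s)%N && (nth false s i.+1 == nth false s i)).

Definition bimultus (s : seq bool) : bool :=
  all (has_equal_neighbor s) (iota 0 (size s)).

Definition bimultus_set (n : nat) : {set n.-tuple bool} :=
  [set t : n.-tuple bool | bimultus t].

Definition bitsum (s : seq bool) : nat := count id s.

Definition ES (R : realType) (n : nat) : R :=
  (\sum_(t in bimultus_set n) (bitsum t)%:R) / #|bimultus_set n|%:R.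

Definition VS (R : realType) (n : nat) : R :=
  (\sum_(t in bimultus_set n) ((bitsum t)%:R - ES R n) ^+ 2)
    / #|bimultus_set n|%:R.

(* Reading a bitstring from left to right, being bimultus is recognised by an
   automaton whose state is the last bit read and whether that bit already has
   an equal neighbour.  Weighting each string by the k-th power of its spin sum
   (#1s - #0s), the automaton turns the weighted counts into linear recurrences
   whose solutions, for k <= 2, are explicit in the Fibonacci numbers F and a
   period-6 sequence.  The first spin moment vanishes, so E(S_n) = n/2 exactly,
   and V(S_n) is the second spin moment divided by 4 * 2 F(n-1), which equals
   n (3 phi + 1) / 20 + O(1) because F(m+1) - phi F(m) = (1 - phi)^m. *)

From HB Require Import structures.
From mathcomp Require Import all_boot all_order all_algebra.
From mathcomp Require Import all_classical all_reals all_analysis.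
From mathcomp Require Import ring lra.
Import Order.TTheory GRing.Theory Num.Theory.
Import numFieldNormedType.Exports.
Local Open Scope classical_set_scope.
Local Open Scope ring_scope.

Lemma cvg_dist_le_div (R : realType) (u : nat -> R) (a C : R) :
  (\forall n \near \oo, `|u n - a| <= C / n%:R) -> u @ \oo --> a.
Proof.
move=> u_near; apply/cvgrPdist_le => eps eps_gt0; near=> n.
have n_gt0 : (0 < n)%N by near: n; exact: nbhs_infty_gt.
have Ceps_le : C / eps <= n%:R by near: n; exact: nbhs_infty_ger.
rewrite distrC; apply: le_trans (_ : C / n%:R <= eps); first by near: n.
by rewrite ler_pdivrMr ?ltr0n // mulrC -ler_pdivrMr.
Unshelve. all: by end_near.
Qed.

(* [bimultus_after b sat s] reads [s] right after a bit [b]; [sat] records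
   whether [b] already has an equal left neighbour. *)
Fixpoint bimultus_after (b sat : bool) (s : seq bool) : bool :=
  match s with
  | [::] => sat
  | c :: t => if c == b then bimultus_after b true t else sat && bimultus_after c false t
  end.

Lemma has_equal_neighbor_cons c s i : (0 < i)%N ->
  has_equal_neighbor (c :: s) i.+1 = has_equal_neighbor s i.
Proof. by case: i. Qed.

Lemma bimultus_afterE s b sat :
  bimultus_after b sat s =
  (sat || (ohead s == Some b)) && all (has_equal_neighbor (b :: s)) (iota 1 (size s)).
Proof.
elim: s b sat => [|c t IH] b sat /=; first by rewrite orbF andbT.
have shift : all (has_equal_neighbor [:: b, c & t]) (iota 2 (size t)) =
             all (has_equal_neighbor (c :: t)) (iota 1 (size t)).
  rewrite -[2%N]/(1 + 1)%N iotaDl all_map; apply: eq_in_all => i.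
  by rewrite mem_iota add1n => /andP[i_gt0 _] /=; rewrite has_equal_neighbor_cons.
have neighbor1 : has_equal_neighbor [:: b, c & t] 1 = (b == c) || (ohead t == Some c).
  by rewrite /has_equal_neighbor /=; case: t {IH shift} => [|d t] //=.
rewrite shift !IH neighbor1 /=; case: (c =P b) => [->|/eqP neq_cb]; first by rewrite !eqxx !orbT.
by rewrite [b == c]eq_sym (negbTE neq_cb) (inj_eq Some_inj) (negbTE neq_cb) orbF.
Qed.

Lemma bimultus_cons c t : bimultus (c :: t) = bimultus_after c false t.
Proof.
rewrite /bimultus /= bimultus_afterE /=; congr andb.
by rewrite /has_equal_neighbor /=; case: t.
Qed.

Lemma big_tuple_cons (V : nmodType) m (P : pred (seq bool)) (F : seq bool -> V) :
  \sum_(t : m.+1.-tuple bool | P t) F t =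
  \sum_(c : bool) \sum_(t : m.-tuple bool | P (c :: t)) F (c :: t).
Proof.
rewrite pair_big_dep /= (reindex (fun p : bool * m.-tuple bool => [tuple of p.1 :: p.2])) //=.
exists (fun t : m.+1.-tuple bool => (thead t, [tuple of behead t])).
  by move=> [c t] _; congr pair; apply: val_inj.
by move=> t _; apply: val_inj => /=; case/tupleP: t.
Qed.

Lemma sum_bimultus_set (V : nmodType) m (F : seq bool -> V) :
  \sum_(t in bimultus_set m.+1) F t =
  \sum_(c : bool) \sum_(t : m.-tuple bool | bimultus_after c false t) F (c :: t).
Proof.
rewrite (eq_bigl (fun t : m.+1.-tuple bool => bimultus t)) => [|t]; last by rewrite inE.
rewrite big_tuple_cons; apply: eq_bigr => c _.
by apply: eq_bigl => t; rewrite bimultus_cons.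
Qed.

Section Moments.
Variable R : realType.

Definition spin (c : bool) : R := if c then 1 else -1.

Definition spin_sum (s : seq bool) : R := \sum_(c <- s) spin c.

Lemma spin_sum_cons c s : spin_sum (c :: s) = spin c + spin_sum s.
Proof. by rewrite /spin_sum big_cons. Qed.

Lemma bitsumE s : (bitsum s)%:R = ((size s)%:R + spin_sum s) / 2 :> R.
Proof.
elim: s => [|c s IH]; first by rewrite /spin_sum big_nil addr0 mul0r.
by rewrite /bitsum /= natrD -/(bitsum s) IH spin_sum_cons -natr1 /spin; case: c => /=; field.
Qed.

Definition moment (P : pred (seq bool)) (k m : nat) : R :=
  \sum_(t : m.-tuple bool | P t) spin_sum t ^+ k.

Lemma moment_shift (P : pred (seq bool)) (k m : nat) (x : R) :
  \sum_(t : m.-tuple bool | P t) (x + spin_sum t) ^+ k =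
  \sum_(i < k.+1) x ^+ (k - i) * moment P i m *+ 'C(k, i).
Proof.
under eq_bigr do rewrite exprDn.
rewrite exchange_big; apply: eq_bigr => i _.
by rewrite /moment mulr_sumr sumrMnl.
Qed.

Lemma moment_after_rec k b sat m :
  moment (bimultus_after b sat) k m.+1 =
  \sum_(i < k.+1) spin b ^+ (k - i) * moment (bimultus_after b true) i m *+ 'C(k, i) +
  (if sat then \sum_(i < k.+1) spin (~~ b) ^+ (k - i) *
                 moment (bimultus_after (~~ b) false) i m *+ 'C(k, i)
   else 0).
Proof.
rewrite /moment (@big_tuple_cons R m _ (fun s => spin_sum s ^+ k)).
under eq_bigr do under eq_bigr do rewrite spin_sum_cons.
rewrite -!moment_shift big_bool.
by case: b; case: sat => //=; rewrite ?big_pred0_eq ?addr0 ?add0r // addrC.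
Qed.

Fixpoint fib (n : nat) : R :=
  if n is n'.+1 then (if n' is n''.+1 then fib n' + fib n'' else 1) else 0.

Fixpoint per6 (n : nat) : R :=
  if n is n'.+1 then (if n' is n''.+1 then per6 n' - per6 n'' else 1) else 1.

Lemma fib0 : fib 0 = 0. Proof. by []. Qed.
Lemma fib1 : fib 1 = 1. Proof. by []. Qed.
Lemma fibSS n : fib n.+2 = fib n.+1 + fib n. Proof. by []. Qed.
Lemma per6_0 : per6 0 = 1. Proof. by []. Qed.
Lemma per6_1 : per6 1 = 1. Proof. by []. Qed.
Lemma per6SS n : per6 n.+2 = per6 n.+1 - per6 n. Proof. by []. Qed.

Arguments fib : simpl never.
Arguments per6 : simpl never.

(* Solutions of the recurrences [moment_after_rec] for k <= 2. *)
Definition moment_after_closed k b sat m : R :=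
  match k with
  | 0%N => if sat then fib m.+1 else fib m
  | 1%N => spin b * (if sat then (fib m - fib m.+1 + 2 * per6 m - per6 m.+1) / 2
                     else (fib m.+1 + per6 m - 2 * per6 m.+1) / 2)
  | 2%N => if sat then (8 * m%:R * fib m.+1 + 6 * m%:R * fib m + 20 * fib m.+1 + fib m
                        - 25 * per6 m + 5 * per6 m.+1) / 10
           else (6 * m%:R * fib m.+1 + 2 * m%:R * fib m + 5 * fib m.+1 + 7 * fib m
                 - 10 * per6 m + 5 * per6 m.+1) / 10
  | _ => 0
  end.

Lemma moment_afterE k b sat m : (k < 3)%N ->
  moment (bimultus_after b sat) k m = moment_after_closed k b sat m.
Proof.
elim: m k b sat => [|m IH] k b sat k_lt3.
  rewrite /moment big_mkcond (big_pred1 [tuple]) => [|t]; last by rewrite [t]tuple0 /= eqxx.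
  by rewrite /spin_sum big_nil; case: k k_lt3 => [|[|[|]]] // _;
    case: sat; rewrite /= ?fib0 ?fib1 ?per6_0 ?per6_1; field.
rewrite moment_after_rec.
case: k k_lt3 => [|[|[|]]] // _; rewrite !big_ord_recr !big_ord0 /= ?bin0 ?bin1 ?binn !IH //.
all: by case: b; case: sat; rewrite /= /spin ?fibSS ?per6SS -?natr1; field.
Qed.

Lemma bimultus_moment k m :
  \sum_(t in bimultus_set m.+1) spin_sum t ^+ k =
  \sum_(c : bool) \sum_(i < k.+1)
     spin c ^+ (k - i) * moment (bimultus_after c false) i m *+ 'C(k, i).
Proof.
rewrite (@sum_bimultus_set R m (fun s => spin_sum s ^+ k)); apply: eq_bigr => c _.
by under eq_bigr do rewrite spin_sum_cons; exact: moment_shift.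
Qed.

Lemma card_bimultus_set m : #|bimultus_set m.+1|%:R = 2 * fib m :> R.
Proof.
rewrite -sumr_const (eq_bigr (fun t : m.+1.-tuple bool => spin_sum t ^+ 0)) //.
rewrite bimultus_moment big_bool !big_ord_recr !big_ord0 /= bin0 !moment_afterE //=.
by rewrite /spin; field.
Qed.

Lemma sum_spin_sum_bimultus m : \sum_(t in bimultus_set m.+1) spin_sum t = 0 :> R.
Proof.
rewrite (eq_bigr (fun t : m.+1.-tuple bool => spin_sum t ^+ 1)) //.
rewrite bimultus_moment big_bool !big_ord_recr !big_ord0 /= ?bin0 ?bin1 !moment_afterE //=.
by rewrite /spin; field.
Qed.

Lemma sum_spin_sum2_bimultus m :
  \sum_(t in bimultus_set m.+1) spin_sum t ^+ 2 =
  (6 * m%:R * fib m.+1 + 2 * m%:R * fib m + 15 * fib m.+1 + 17 * fib m - 15 * per6 m.+1) / 5 :> R.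
Proof.
rewrite bimultus_moment big_bool !big_ord_recr !big_ord0 /= ?bin0 ?bin1 ?binn !moment_afterE //=.
by rewrite /spin; field.
Qed.

Lemma fib_ge0 m : 0 <= fib m.
Proof.
elim/ltn_ind: m => -[|[|m]] IH; rewrite ?fib0 ?fib1 ?fibSS //.
by rewrite addr_ge0 ?IH.
Qed.

Lemma fib_le_fibS m : fib m <= fib m.+1.
Proof. by case: m => [|m]; rewrite ?fib0 ?fib1 ?fibSS ?lerDl ?fib_ge0. Qed.

Lemma fibS_ge1 m : 1 <= fib m.+1.
Proof. by elim: m => [|m IH]; [rewrite fib1 | exact: le_trans IH (fib_le_fibS _)]. Qed.

Lemma fibS_gt0 m : 0 < fib m.+1.
Proof. exact: lt_le_trans ltr01 (fibS_ge1 m). Qed.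

Lemma fibSS_le_double m : fib m.+2 <= 2 * fib m.+1.
Proof. by rewrite fibSS mulr2n mulrDl mul1r lerD2l fib_le_fibS. Qed.

Lemma fibS_ge_id m : m%:R <= fib m.+1.
Proof.
elim: m => [|[|m] IH]; first by rewrite fib1 ler01.
  by rewrite fibSS fib1 fib0 addr0.
by have := fibS_ge1 m; rewrite !fibSS -!natr1 in IH *; lra.
Qed.

Lemma card_bimultus_set_gt0 n : (2 <= n)%N -> 0 < #|bimultus_set n|%:R :> R.
Proof.
by case: n => [|[|m]] // _; rewrite card_bimultus_set mulr_gt0 ?fibS_gt0.
Qed.

Lemma ES_half n : (2 <= n)%N -> ES R n = n%:R / 2.
Proof.
case: n => [|[|m]] // n_ge2; have card_gt0 := card_bimultus_set_gt0 _ n_ge2.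
rewrite /ES; under eq_bigr do rewrite bitsumE size_tuple.
rewrite -mulr_suml big_split /= sum_spin_sum_bimultus addr0 sumr_const -mulr_natr.
by field; rewrite gt_eqF.
Qed.

Lemma VS_spin_sum n : (2 <= n)%N ->
  VS R n = (\sum_(t in bimultus_set n) spin_sum t ^+ 2) / 4 / #|bimultus_set n|%:R.
Proof.
move=> n_ge2; rewrite /VS ES_half //; congr (_ / _); rewrite mulr_suml; apply: eq_bigr => t _.
by rewrite bitsumE size_tuple; field.
Qed.

Lemma per6_add3 n : per6 n.+3 = - per6 n.
Proof. by rewrite !per6SS; ring. Qed.

Lemma per6_bound n : `|per6 n| <= 1.
Proof.
elim/ltn_ind: n => -[|[|[|n]]] IH; rewrite ?per6_0 ?per6_1 ?normr1 //.
  by rewrite per6SS per6_1 per6_0 subrr normr0 ler01.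
by rewrite per6_add3 normrN; apply: IH; rewrite ltnS leqW ?leqnSn.
Qed.

Definition phi : R := (1 + Num.sqrt 5) / 2.

Lemma phi_sqr : phi ^+ 2 = phi + 1.
Proof.
have sqrt5_sqr : Num.sqrt 5 ^+ 2 = 5 :> R by rewrite sqr_sqrtr ?ler0n.
have -> : phi ^+ 2 = (1 + 2 * Num.sqrt 5 + Num.sqrt 5 ^+ 2) / 4 by rewrite /phi; field.
by rewrite sqrt5_sqr /phi; field.
Qed.

Lemma phi_bounds : 1 <= phi <= 2.
Proof.
have := phi_sqr; have := sqrtr_ge0 (5 : R); rewrite /phi => ? ?.
by apply/andP; split; nra.
Qed.

Lemma fibS_sub_phi m : fib m.+1 - phi * fib m = (1 - phi) ^+ m.
Proof.
elim: m => [|m IH]; first by rewrite fib1 fib0 mulr0 subr0 expr0.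
rewrite exprS -IH; apply/eqP; rewrite -subr_eq0; apply/eqP.
have -> : fib m.+2 - phi * fib m.+1 - (1 - phi) * (fib m.+1 - phi * fib m) =
          fib m * (1 + phi - phi ^+ 2) by rewrite fibSS; ring.
by rewrite phi_sqr [phi + 1]addrC subrr mulr0.
Qed.

Lemma fibS_sub_phi_bound m : `|fib m.+1 - phi * fib m| <= 1.
Proof.
rewrite fibS_sub_phi normrX exprn_ile1 //.
by have /andP[? ?] := phi_bounds; rewrite ler_norml; apply/andP; split; lra.
Qed.

Lemma VS_closed m : (0 < m)%N -> VS R m.+1 =
  (6 * m%:R * fib m.+1 + 2 * m%:R * fib m + 15 * fib m.+1 + 17 * fib m - 15 * per6 m.+1)
  / (40 * fib m).
Proof.
case: m => [//|m] _; rewrite VS_spin_sum // sum_spin_sum2_bimultus card_bimultus_set.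
by field; rewrite gt_eqF ?fibS_gt0.
Qed.

Lemma VS_bound n : (2 <= n)%N ->
  `|VS R n / n%:R - (5 + 3 * Num.sqrt 5) / 40| <= 3 / n%:R.
Proof.
case: n => [|[|m]] // _; rewrite VS_closed // -[m.+2%:R]natr1.
have := fibS_sub_phi_bound m.+1; have := per6_bound m.+2; have := fibSS_le_double m.
have := fibS_ge_id m.+1; have := fibS_ge1 m; have := ltr0Sn R m.
move: m.+1%:R (fib m.+1) (fib m.+2) (per6 m.+2)
  => k F0 F1 p k_gt0 F0_ge1 k_le_F1 F1_le p_le1 golden_err.
have F0_gt0 : 0 < F0 by exact: lt_le_trans ltr01 F0_ge1.
have D_gt0 : 0 < 40 * (k + 1) * F0 by rewrite !mulr_gt0 ?addr_gt0.
(* As (5 + 3 sqrt 5) / 40 = (6 phi + 2) / 40, the terms of order k F0 cancel. *)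
have -> : (6 * k * F1 + 2 * k * F0 + 15 * F1 + 17 * F0 - 15 * p) / (40 * F0) / (k + 1)
          - (5 + 3 * Num.sqrt 5) / 40 =
          (6 * k * (F1 - phi * F0) + 15 * F1 + (15 - 6 * phi) * F0 - 15 * p) / (40 * (k + 1) * F0).
  by rewrite /phi; field; rewrite !gt_eqF ?addr_gt0.
have -> : 3 / (k + 1) = 120 * F0 / (40 * (k + 1) * F0).
  by field; rewrite !gt_eqF ?addr_gt0.
rewrite normrM normfV (gtr0_norm D_gt0) ler_pM2r ?invr_gt0 //.
move: p_le1 golden_err phi_bounds; rewrite !ler_norml => /andP[? ?] /andP[? ?] /andP[? ?].
have /andP[? ?] : -k <= k * (F1 - phi * F0) <= k by apply/andP; split; nra.
have /andP[? ?] : F0 <= phi * F0 <= 2 * F0 by apply/andP; split; nra.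
by apply/andP; split; lra.
Qed.

End Moments.

Theorem mainTheorem1 (R : realType) :
  (fun n : nat => ES R n / n%:R) @ \oo --> (1 / 2 : R) /\
  (fun n : nat => VS R n / n%:R) @ \oo --> ((5 + 3 * Num.sqrt 5) / 40 : R).
Proof.
split.
- apply: cvg_near_cst; near=> n.
  have n_ge2 : (2 <= n)%N by near: n; exact: nbhs_infty_ge.
  by rewrite ES_half // mulrAC divff ?pnatr_eq0 -?lt0n ?(leq_trans _ n_ge2).
- apply: (@cvg_dist_le_div _ _ _ 3); near=> n.
  by apply: VS_bound; near: n; exact: nbhs_infty_ge.
Unshelve. all: by end_near.
Qed.
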